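(* Let $D$ be a friendship digraph. Then $D^{\leftarrow}$ is a friendship digraph. Equivalently, in a friendship digraph any two distinct vertices have exactly one common in-neighbor.
   Context: All digraphs are finite and have neither loops nor parallel arcs (a pair of opposite arcs $(u,v)$ and $(v,u)$ is allowed). A friendship digraph is a nontrivial digraph (at least two vertices) in which any two distinct vertices have exactly one common out-neighbor. For a digraph $D$, $D^{\leftarrow}$ is the digraph with $V(D^{\leftarrow})=V(D)$ and $(u,v)\in A(D^{\leftarrow})$ if and only if $(v,u)\in A(D)$. *)

From mathcomp Require Import all_boot.
Set Implicit Arguments. Unset Strict Implicit. Unset Printing Implicit Defensive.

(* No parallel arcs is automatic
   (a relation); "no loops" is the condition [irreflexive arc]. *)
Definition loopless (V : finType) (arc : rel V) : Prop := irreflexive arc.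

Definition common_out (V : finType) (arc : rel V) (u v : V) : {set V} :=
  [set w | arc u w && arc v w].

Definition friendship_digraph (V : finType) (arc : rel V) : Prop :=
  [/\ loopless arc, 1 < #|V| &
      forall u v : V, u != v -> #|common_out arc u v| = 1].

Definition converse (V : finType) (arc : rel V) : rel V := fun u v => arc v u.

From mathcomp Require Import all_boot all_order all_algebra zify.
Import Order.TTheory GRing.Theory Num.Theory.
Set Implicit Arguments. Unset Strict Implicit. Unset Printing Implicit Defensive.

(* If u does not point to x, then v |-> (the common out-neighbour of u and v)
   maps the in-neighbours of x injectively into the out-neighbours of u, since two
   in-neighbours of x already have x as their common out-neighbour.  So along every
   non-arc (u, x), u has at most as many non-out-neighbours as x has
   non-in-neighbours.  Every row and column of the non-arc relation is nonempty
   (there are no loops), so summing 1/#(row) - 1/#(column) >= 0 over all non-arcs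
   gives n - n = 0, which forces equality everywhere: the injection is onto.
   Hence every out-neighbour y of such a u shares an in-neighbour with x.  Given x
   and y, pick an in-neighbour w of y (it exists because y has as many in- as
   out-neighbours); either w points to x or it is such a u.  Uniqueness is direct:
   two common in-neighbours of x and y would have two common out-neighbours. *)

Section DoubleCounting.

Variables (A B : finType) (R : A -> B -> bool).

Local Notation row a := #|[set b | R a b]|.
Local Notation col b := #|[set a | R a b]|.

Hypotheses (row_gt0 : forall a, 0 < row a) (col_gt0 : forall b, 0 < col b).
Hypothesis card_le : #|A| <= #|B|.
Hypothesis row_le_col : forall a b, R a b -> row a <= col b.

Local Open Scope ring_scope.

Lemma sum_inv_card_row : \sum_a \sum_(b | R a b) (row a)%:R^-1 = #|A|%:R :> rat.
Proof.
rewrite -sum1_card natr_sum; apply: eq_bigr => a _.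
rewrite sumr_const (@eq_card _ _ [set b | R a b]) => [|b]; last by rewrite inE.
rewrite -[LHS]mulr_natr; apply: mulVf; rewrite pnatr_eq0 -lt0n; exact: row_gt0.
Qed.

Lemma sum_inv_card_col : \sum_a \sum_(b | R a b) (col b)%:R^-1 = #|B|%:R :> rat.
Proof.
rewrite (exchange_big_dep xpredT) //= -sum1_card natr_sum; apply: eq_bigr => b _.
rewrite sumr_const (@eq_card _ _ [set a | R a b]) => [|a]; last by rewrite inE.
rewrite -[LHS]mulr_natr; apply: mulVf; rewrite pnatr_eq0 -lt0n; exact: col_gt0.
Qed.

Lemma card_row_eq_col a b : R a b -> row a = col b.
Proof.
pose gap a b : rat := (row a)%:R^-1 - (col b)%:R^-1.
have gap_ge0 a' b' : R a' b' -> 0 <= gap a' b'.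
  move=> Rab; rewrite subr_ge0 lef_pV2 ?posrE ?ltr0n ?ler_nat //; exact: row_le_col.
have row_gap_ge0 a' : 0 <= \sum_(b | R a' b) gap a' b.
  by apply: sumr_ge0 => b'; apply: gap_ge0.
have sum_gap_le0 : \sum_a \sum_(b | R a b) gap a b <= 0.
  rewrite /gap; under eq_bigr => a' _ do rewrite sumrB.
  by rewrite sumrB sum_inv_card_row sum_inv_card_col subr_le0 ler_nat.
have sum_gap0 : \sum_a \sum_(b | R a b) gap a b = 0.
  by apply/eqP; rewrite eq_le sum_gap_le0 sumr_ge0.
move=> Rab; have row_gap0 : \sum_(b | R a b) gap a b = 0.
  exact: (psumr_eq0P (fun a' _ => row_gap_ge0 a') sum_gap0).
have /eqP := psumr_eq0P (gap_ge0 a) row_gap0 Rab.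
by rewrite subr_eq0 (inj_eq invr_inj) eqr_nat => /eqP.
Qed.

End DoubleCounting.

Section FriendshipDigraph.

Variables (V : finType) (arc : rel V).
Hypothesis arc_irr : irreflexive arc.
Hypothesis common_out1 : forall u v, u != v -> #|common_out arc u v| = 1.

Definition out_nbhd u := [set w | arc u w].
Definition in_nbhd x := [set v | arc v x].

Lemma common_out_uniq u v w1 w2 :
  u != v -> arc u w1 -> arc v w1 -> arc u w2 -> arc v w2 -> w1 = w2.
Proof.
move=> /common_out1/eqP/cards1P[w uvw] uw1 vw1 uw2 vw2.
have : w1 \in common_out arc u v by rewrite inE uw1.
have : w2 \in common_out arc u v by rewrite inE uw2.
by rewrite uvw !inE => /eqP-> /eqP->.
Qed.

Definition common_succ u v := odflt u [pick w in common_out arc u v].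

Lemma common_succ_arc u v : u != v -> arc u (common_succ u v) /\ arc v (common_succ u v).
Proof.
move=> /common_out1 card_uv; rewrite /common_succ; case: pickP => [w|no_w].
  by rewrite inE => /andP.
by move: card_uv; rewrite eq_card0.
Qed.

Section NonArc.

Variables (u x : V).
Hypothesis not_ux : ~~ arc u x.

Lemma in_nbhd_neq v : v \in in_nbhd x -> u != v.
Proof. by rewrite inE; apply: contraTneq => <-. Qed.

Lemma common_succ_inj : {in in_nbhd x &, injective (common_succ u)}.
Proof.
move=> v1 v2 v1x v2x eq_succ; apply/eqP; apply: contraTT not_ux => v12.
have [uw1 v1w1] := common_succ_arc (in_nbhd_neq v1x).
have [_ v2w1] := common_succ_arc (in_nbhd_neq v2x); rewrite -eq_succ in v2w1.
move: v1x v2x; rewrite !inE => v1x v2x.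
by rewrite negbK (common_out_uniq v12 v1x v2x v1w1 v2w1).
Qed.

Lemma common_succ_sub : common_succ u @: in_nbhd x \subset out_nbhd u.
Proof.
apply/subsetP => _ /imsetP[v vx ->]; rewrite inE.
by have [] := common_succ_arc (in_nbhd_neq vx).
Qed.

Lemma in_nbhd_le_out_nbhd : #|in_nbhd x| <= #|out_nbhd u|.
Proof. by rewrite -(card_in_imset common_succ_inj) subset_leq_card ?common_succ_sub. Qed.

End NonArc.

Lemma card_nonarc_out u : #|[set x | ~~ arc u x]| = #|V| - #|out_nbhd u|.
Proof.
by rewrite -(cardsC (out_nbhd u)) addKn; apply: eq_card => x; rewrite !inE.
Qed.

Lemma card_nonarc_in x : #|[set u | ~~ arc u x]| = #|V| - #|in_nbhd x|.
Proof.
by rewrite -(cardsC (in_nbhd x)) addKn; apply: eq_card => u; rewrite !inE.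
Qed.

Lemma in_nbhd_eq_out_nbhd u x : ~~ arc u x -> #|in_nbhd x| = #|out_nbhd u|.
Proof.
have nonarc_out_gt0 w : 0 < #|[set y | ~~ arc w y]|.
  by apply/card_gt0P; exists w; rewrite inE arc_irr.
have nonarc_in_gt0 w : 0 < #|[set v | ~~ arc v w]|.
  by apply/card_gt0P; exists w; rewrite inE arc_irr.
have nonarc_le u' x' :
    ~~ arc u' x' -> #|[set y | ~~ arc u' y]| <= #|[set v | ~~ arc v x']|.
  move=> not_ux'; rewrite card_nonarc_out card_nonarc_in.
  by rewrite leq_sub2l ?in_nbhd_le_out_nbhd.
move=> /(card_row_eq_col nonarc_out_gt0 nonarc_in_gt0 (leqnn _) nonarc_le).
rewrite card_nonarc_out card_nonarc_in.
have := max_card (in_nbhd x); have := max_card (out_nbhd u); lia.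
Qed.

Lemma common_in_of_nonarc u x y : ~~ arc u x -> arc u y -> exists2 v, arc v x & arc v y.
Proof.
move=> not_ux uy.
have image_eq : common_succ u @: in_nbhd x = out_nbhd u.
  apply/eqP; rewrite eqEcard (common_succ_sub not_ux) /=.
  by rewrite (card_in_imset (common_succ_inj not_ux)) (in_nbhd_eq_out_nbhd not_ux).
have : y \in out_nbhd u by rewrite inE.
rewrite -image_eq => /imsetP[v vx ->]; exists v; first by rewrite inE in vx.
by have [] := common_succ_arc (in_nbhd_neq not_ux vx).
Qed.

Lemma common_in_uniq x y v1 v2 :
  x != y -> arc v1 x -> arc v1 y -> arc v2 x -> arc v2 y -> v1 = v2.
Proof.
move=> xy v1x v1y v2x v2y; apply/eqP; apply: contraTT xy => v12.
by rewrite negbK (common_out_uniq v12 v1x v2x v1y v2y).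
Qed.

Hypothesis card_gt1 : 1 < #|V|.

Lemma out_nbhd_gt0 u : 0 < #|out_nbhd u|.
Proof.
have /card_gt0P[v] : 0 < #|[set~ u]| by rewrite cardsC1 -ltnS (ltn_predK card_gt1).
rewrite !inE eq_sym => uv; apply/card_gt0P; exists (common_succ u v); rewrite inE.
by have [] := common_succ_arc uv.
Qed.

Lemma common_in_exists x y : exists2 v, arc v x & arc v y.
Proof.
have /card_gt0P[w] : 0 < #|in_nbhd y|.
  by rewrite (@in_nbhd_eq_out_nbhd y) ?arc_irr ?out_nbhd_gt0.
rewrite inE => wy; have [wx | not_wx] := boolP (arc w x); first by exists w.
exact: common_in_of_nonarc not_wx wy.
Qed.

End FriendshipDigraph.

Theorem theorem2p4 (V : finType) (arc : rel V) :
  friendship_digraph arc -> friendship_digraph (converse arc).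
Proof.
move=> [arc_irr card_gt1 common_out1]; split=> // x y xy.
have [v vx vy] := common_in_exists arc_irr common_out1 card_gt1 x y.
apply/eqP/cards1P; exists v; apply/setP => w; rewrite !inE /converse.
apply/andP/eqP => [[wx wy] | ->] //.
exact: (common_in_uniq common_out1 xy wx wy vx vy).
Qed.
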